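(* For any $n\in\mathbb{N}$ with $n\geq2$, the monoid $\mathrm{rps}_n$ is not finitely presented.
   Context: Let $\mathcal{A}_n=\{1<2<\cdots<n\}$. An rPS tableau is a finite (possibly empty) sequence of nonempty bottom-justified columns of boxes filled with positive integers, such that the entries of each column are weakly decreasing from top to bottom and the bottom entries of the columns form a strictly increasing sequence from left to right. Right insertion of a symbol $a$ into an rPS tableau $B$: if $a$ is strictly greater than every entry of the bottom row, append a new column consisting of $a$ at the right end; otherwise, let $z$ be the leftmost bottom-row entry with $z\geq a$ and put $a$ in a new box at the bottom of the column of $z$ (the previous entries of that column move up one box). For $w=w_1\cdots w_k$, $\mathfrak{R}_r(w)$ is obtained by starting with the empty tableau and right-inserting $w_1,\dots,w_k$ in order. The monoid $\mathrm{rps}_n$ is the quotient of the free monoid $\mathcal{A}_n^*$ by the congruence $u\equiv v\iff\mathfrak{R}_r(u)=\mathfrak{R}_r(v)$. *)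

From mathcomp Require Import all_boot.
Set Implicit Arguments. Unset Strict Implicit. Unset Printing Implicit Defensive.

(* The alphabet A_n = {1 < ... < n} is represented by 'I_n (values 0..n-1,
   with the order inherited from nat; an order isomorphism). *)

(* An rPS tableau: a list of columns, left to right.  Each column is stored
   bottom-first: [:: bottom; ...; top]. *)
Definition rps_tableau := seq (seq nat).

Fixpoint rps_rinsert (a : nat) (B : rps_tableau) : rps_tableau :=
  match B with
  | [::] => [:: [:: a]]
  | c :: B' => if a <= head a c then (a :: c) :: B' else c :: rps_rinsert a B'
  end.

Definition rps_Rr (w : seq nat) : rps_tableau :=
  foldl (fun B a => rps_rinsert a B) [::] w.

Definition rps_equiv (n : nat) (u v : seq 'I_n) : Prop :=
  rps_Rr (map val u) = rps_Rr (map val v).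

Inductive cong_gen (B : eqType) (R : seq (seq B * seq B)) : seq B -> seq B -> Prop :=
  | cg_base : forall p q l r, (l, r) \in R -> cong_gen R (p ++ l ++ q) (p ++ r ++ q)
  | cg_refl : forall u, cong_gen R u u
  | cg_sym : forall u v, cong_gen R u v -> cong_gen R v u
  | cg_trans : forall u v w, cong_gen R u v -> cong_gen R v w -> cong_gen R u w.

Definition word_hom (B : Type) (n : nat) (f : B -> seq 'I_n) (u : seq B) : seq 'I_n :=
  flatten (map f u).

Definition rps_finitely_presented (n : nat) : Prop :=
  exists (B : finType) (f : B -> seq 'I_n) (R : seq (seq B * seq B)),
    (forall w : seq 'I_n, exists u : seq B, rps_equiv w (word_hom f u)) /\
    (forall u v : seq B, cong_gen R u v <-> rps_equiv (word_hom f u) (word_hom f v)).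

(** A finite set of relations has sides of bounded length [L].  For [k > L],
    a factor of length at most [L] of [0 1^k 0] contains at most one [0], and
    a word over [{0, 1}] with at most one [0] is determined by its rPS
    tableau; hence no relation can change [0 1^k 0], whose congruence class in
    the presented monoid is therefore a singleton.  Yet [0 1^k 0] and
    [0 0 1^k] have the same tableau. *)

From mathcomp Require Import all_boot zify.
Set Implicit Arguments. Unset Strict Implicit. Unset Printing Implicit Defensive.

Local Notation rps_step := (fun B a => rps_rinsert a B).

Lemma perm_rps_rinsert a B : perm_eq (flatten (rps_rinsert a B)) (a :: flatten B).
Proof.
elim: B => [|c B IH] //=; case: ifP => _ //=.
by rewrite perm_sym -cat1s perm_catCA perm_cat2l perm_sym.
Qed.

Lemma perm_foldl_rps_step B w :
  perm_eq (flatten (foldl rps_step B w)) (flatten B ++ w).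
Proof.
elim: w B => [|a w IH] B /=; first by rewrite cats0.
apply: perm_trans (IH _) _; rewrite -cat1s catA perm_cat2r.
by rewrite perm_sym cats1 perm_rcons perm_sym perm_rps_rinsert.
Qed.

Lemma perm_rps_Rr w : perm_eq (flatten (rps_Rr w)) w.
Proof. exact: perm_foldl_rps_step. Qed.

Lemma rps_Rr_perm_eq u v : rps_Rr u = rps_Rr v -> perm_eq u v.
Proof.
move=> eq_uv; apply: perm_trans (perm_rps_Rr v).
by rewrite perm_sym -eq_uv perm_rps_Rr.
Qed.

Lemma size_flatten_rps_Rr w : size (flatten (rps_Rr w)) = size w.
Proof. exact: perm_size (perm_rps_Rr w). Qed.

Lemma foldl_rps_step_above z c B w : all (fun a => z < a) w ->
  foldl rps_step ((z :: c) :: B) w = (z :: c) :: foldl rps_step B w.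
Proof.
elim: w B => [|a w IH] B //= /andP[z_lt_a /IH <-].
by rewrite leqNgt z_lt_a.
Qed.

Lemma rps_Rr_cat u v : rps_Rr (u ++ v) = foldl rps_step (rps_Rr u) v.
Proof. exact: foldl_cat. Qed.

Lemma rps_Rr_rcons w a : rps_Rr (rcons w a) = rps_rinsert a (rps_Rr w).
Proof. exact: foldl_rcons. Qed.

Lemma rps_Rr_nseq a y : rps_Rr (nseq a.+1 y) = [:: nseq a.+1 y].
Proof.
elim: a => [|a IH]; first by [].
by rewrite -[in LHS]addn1 nseqD cats1 rps_Rr_rcons IH /= leqnn.
Qed.

Lemma rps_Rr_nseq_cat x y a w : x <= y -> all (fun b => x < b) w ->
  rps_Rr (nseq a y ++ x :: w) = (x :: nseq a y) :: rps_Rr w.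
Proof.
move=> x_le_y w_gt_x; rewrite rps_Rr_cat /=.
have -> : rps_rinsert x (rps_Rr (nseq a y)) = [:: x :: nseq a y].
  by case: a => [|a]; rewrite ?rps_Rr_nseq //= x_le_y.
exact: foldl_rps_step_above.
Qed.

Lemma rps_equiv_seq1 n (a : 'I_n) u : rps_equiv [:: a] u -> u = [:: a].
Proof.
move=> /rps_Rr_perm_eq /= perm_au; apply: (inj_map val_inj) => /=.
move: (map val u) perm_au => s perm_as; have := perm_size perm_as.
case: s perm_as => [|b [|? ?]] //= perm_ab _.
by have := perm_mem perm_ab b; rewrite !inE eqxx => /eqP ->.
Qed.

Lemma rps_Rr_cons_rcons x w : all (fun a => x < a) w ->
  rps_Rr (rcons (x :: w) x) = rps_Rr [:: x, x & w].
Proof.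
move=> w_gt_x; rewrite rps_Rr_rcons.
rewrite -[x :: w]/(nseq 0 x ++ x :: w) -[[:: x, x & w]]/(nseq 1 x ++ x :: w).
by rewrite !rps_Rr_nseq_cat //= leqnn.
Qed.

Lemma binary_count0_eq0 s : all (leq^~ 1) s -> count_mem 0 s = 0 -> s = nseq (size s) 1.
Proof.
elim: s => [|[|[|x]] s IH] //= s_bin s_count.
by rewrite -IH.
Qed.

Lemma binary_count0_eq1 s : all (leq^~ 1) s -> count_mem 0 s = 1 ->
  exists a b, s = nseq a 1 ++ 0 :: nseq b 1.
Proof.
elim: s => [|[|[|x]] s IH] //= s_bin s_count.
- by exists 0, (size s); rewrite -binary_count0_eq0 //; case: s_count.
- by have [a [b ->]] := IH s_bin s_count; exists a.+1, b.
Qed.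

Lemma rps_Rr_inj_binary X Y : all (leq^~ 1) X -> count_mem 0 X <= 1 ->
  rps_Rr X = rps_Rr Y -> X = Y.
Proof.
move=> X_bin X_count eq_XY; have perm_XY := rps_Rr_perm_eq eq_XY.
have Y_bin : all (leq^~ 1) Y by rewrite -(perm_all _ perm_XY).
have /permP count_XY := perm_XY.
move: X_count; rewrite leq_eqVlt ltnS leqn0 => /orP[/eqP X_count | /eqP X_count].
- have [a [b eq_X]] := binary_count0_eq1 X_bin X_count.
  have [c [d eq_Y]] := binary_count0_eq1 Y_bin (etrans (esym (count_XY _)) X_count).
  move: eq_XY; rewrite eq_X eq_Y !rps_Rr_nseq_cat ?all_nseq ?orbT //.
  case=> /(congr1 size); rewrite !size_nseq => -> /(congr1 (size \o flatten)) /=.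
  by rewrite !size_flatten_rps_Rr !size_nseq => ->.
- rewrite (binary_count0_eq0 X_bin X_count) (binary_count0_eq0 Y_bin).
    by rewrite (perm_size perm_XY).
  by rewrite -count_XY.
Qed.

Lemma count_take (T : eqType) (a : pred T) n s : count a (take n s) <= count a s.
Proof. by rewrite -{2}(cat_take_drop n s) count_cat leq_addr. Qed.

Lemma short_factor_binary P X Q i j : size X <= i ->
  P ++ X ++ Q = 0 :: nseq i 1 ++ 0 :: nseq j 1 ->
  all (leq^~ 1) X && (count_mem 0 X <= 1).
Proof.
move=> X_short eq_PXQ.
have : all (leq^~ 1) (P ++ X ++ Q) by rewrite eq_PXQ /= all_cat /= !all_nseq !orbT.
rewrite !all_cat => /and3P[_ -> _] /=.
case: P eq_PXQ => [|p P] /= eq_PXQ.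
- have -> : X = take (size X) (0 :: nseq i 1).
    move: eq_PXQ => /(congr1 (take (size X))); rewrite take_size_cat //.
    by rewrite -cat_cons take_cat /= size_nseq ltnS X_short.
  by apply: leq_trans (count_take _ _ _) _; rewrite /= count_nseq.
- (* [P] takes the first [0], so [X] can only contain the second one. *)
  case: eq_PXQ => _ /(congr1 (count_mem 0)).
  by rewrite !count_cat /= !count_nseq /= !mul0n; lia.
Qed.

Lemma cong_gen_base (T : eqType) (R : seq (seq T * seq T)) l r :
  (l, r) \in R -> cong_gen R l r.
Proof. by move=> lr_R; have := cg_base [::] [::] lr_R; rewrite /= !cats0. Qed.

Lemma cong_gen_invariant (T : eqType) (U : Type) (R : seq (seq T * seq T))
    (g : seq T -> U) (P : U -> Prop) :
  (forall p q l r, (l, r) \in R ->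
     P (g (p ++ l ++ q)) \/ P (g (p ++ r ++ q)) -> g (p ++ l ++ q) = g (p ++ r ++ q)) ->
  forall u v, cong_gen R u v -> P (g u) \/ P (g v) -> g u = g v.
Proof.
move=> step_fixed u v; elim=> {u v} [||u v _ IH Puv|u v w _ IHuv _ IHvw [Pu | Pw]].
- exact: step_fixed.
- by [].
- by rewrite IH //; case: Puv; [right | left].
- have eq_uv := IHuv (or_introl Pu).
  by rewrite eq_uv IHvw //; left; rewrite -eq_uv.
- have eq_vw := IHvw (or_intror Pw).
  by rewrite -eq_vw IHuv //; right; rewrite eq_vw.
Qed.

Lemma cong_gen_fixes_0_ones_0 (T : eqType) (R : seq (seq T * seq T))
    (g : seq T -> seq nat) L i j u v :
  {morph g : x y / x ++ y} ->
  (forall l r, (l, r) \in R -> rps_Rr (g l) = rps_Rr (g r)) ->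
  (forall l r, (l, r) \in R -> size (g l) <= L /\ size (g r) <= L) ->
  L <= i -> g u = 0 :: nseq i 1 ++ 0 :: nseq j 1 -> cong_gen R u v -> g v = g u.
Proof.
move=> g_cat R_sound R_short L_le_i g_u cg_uv; apply/esym.
pose P s := exists i j, L <= i /\ s = 0 :: nseq i 1 ++ 0 :: nseq j 1.
have short_factor_fixed p X Y q : size X <= L -> rps_Rr X = rps_Rr Y ->
    P (p ++ X ++ q) -> X = Y.
  move=> X_short eq_XY [i' [j' [L_le_i' eq_pXq]]].
  have /andP[X_bin X_count] := short_factor_binary (leq_trans X_short L_le_i') eq_pXq.
  exact: rps_Rr_inj_binary.
apply: (cong_gen_invariant (P := P)) cg_uv _; last by left; exists i, j.
move=> p q l r lr_R; have eq_lr := R_sound _ _ lr_R.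
have [l_short r_short] := R_short _ _ lr_R; rewrite !g_cat.
case=> [P_l | P_r]; first by rewrite (short_factor_fixed _ _ _ _ l_short eq_lr P_l).
by rewrite (short_factor_fixed _ _ _ _ r_short (esym eq_lr) P_r).
Qed.

Lemma seq_pairs_bounded (T : eqType) (R : seq (T * T)) (h : T -> nat) :
  exists L, forall l r, (l, r) \in R -> h l <= L /\ h r <= L.
Proof.
exists (\max_(lr <- R) (h lr.1 + h lr.2)) => l r lr_R.
have /= lr_le := leq_bigmax_seq (P := xpredT) (F := fun lr => h lr.1 + h lr.2) _ lr_R isT.
by split; apply: leq_trans lr_le; [apply: leq_addr | apply: leq_addl].
Qed.

Lemma word_hom_cat (B : Type) n (f : B -> seq 'I_n) : {morph word_hom f : u v / u ++ v}.
Proof. by move=> u v; rewrite /word_hom map_cat flatten_cat. Qed.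

Theorem proposition3p25 (n : nat) : 2 <= n -> ~ rps_finitely_presented n.
Proof.
case: n => [|[|n]] // _ [B [f [R [f_onto f_pres]]]].
pose g u := map val (word_hom f u).
have g_cat : {morph g : u v / u ++ v} by move=> u v; rewrite /g word_hom_cat map_cat.
have [L R_short] := seq_pairs_bounded R (fun w => size (g w)).
have R_sound l r : (l, r) \in R -> rps_Rr (g l) = rps_Rr (g r).
  by move=> /cong_gen_base /f_pres.
have letter (a : 'I_n.+2) : exists U, g U = [:: val a].
  by have [U /rps_equiv_seq1 f_U] := f_onto [:: a]; exists U; rewrite /g f_U.
have [U0 g_U0] := letter ord0.
have [U1 g_U1] := letter (Ordinal (isT : 1 < n.+2)).
have [ones g_ones] : exists W, g W = nseq L.+1 1.
  by exists (flatten (nseq L.+1 U1)); elim: L.+1 => //= k IH; rewrite g_cat g_U1 IH.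
pose u := U0 ++ ones ++ U0.
pose v := U0 ++ U0 ++ ones.
have g_u : g u = 0 :: nseq L.+1 1 ++ 0 :: nseq 0 1 by rewrite /u !g_cat g_U0 g_ones.
have g_v : g v = [:: 0, 0 & nseq L.+1 1] by rewrite /v !g_cat g_U0 g_ones.
have cg_uv : cong_gen R u v.
  apply/f_pres; rewrite /rps_equiv -/(g u) -/(g v) g_u g_v cats1 -rcons_cons.
  by rewrite rps_Rr_cons_rcons // all_nseq orbT.
have := cong_gen_fixes_0_ones_0 g_cat R_sound R_short (leqnSn L) g_u cg_uv.
by rewrite g_v g_u => -[].
Qed.
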